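(* Let $\boldsymbol{A}$ be the adjacency matrix of an undirected graph without self-loops on a finite vertex set $\boldsymbol{V}=\{1,\dots,N\}$. Let $\mathcal{R}_e\subset\boldsymbol{V}$ be a nonempty set of egos and $\mathcal{R}_a\subset\boldsymbol{V}\setminus\mathcal{R}_e$ a nonempty set of alters, $n_a=|\mathcal{R}_a|$, where each alter $j\in\mathcal{R}_a$ has a unique recruiting ego $e(j)\in\mathcal{R}_e$ with $A_{j\,e(j)}=1$. Let $\widetilde{\boldsymbol{A}}$ be the observed adjacency matrix, with $\widetilde A_{ij}=\widetilde A_{ji}=1$ if and only if $i\in\mathcal{R}_a$ and $j=e(i)$ (all other entries $0$). Let $\boldsymbol{Z}\in\{0,1\}^N$ have independent components with $\Pr(Z_i=1)=p_z\,\mathbb{I}\{i\in\mathcal{R}_e\}$ for a known $p_z\in(0,1)$. Define $F_i=\mathbb{I}\{\sum_{j\neq i}Z_jA_{ij}>0\}$ and $\widetilde F_i=\mathbb{I}\{\sum_{j\neq i}Z_j\widetilde A_{ij}>0\}$. Each unit $i\in\mathcal{R}_e\cup\mathcal{R}_a$ has fixed real potential outcomes $Y_i(z,f)$, $z,f\in\{0,1\}$, and observed outcome $Y_i=\sum_{z,f\in\{0,1\}}Y_i(z,f)\mathbb{I}\{Z_i=z,F_i=f\}$. For $i\in\mathcal{R}_a$ let $\pi_i^a=\Pr(F_i=1)$ (over $\boldsymbol{Z}$), and assume $\pi_i^a<1$ for all $i\in\mathcal{R}_a$. Define $$IE=\frac1{n_a}\sum_{i\in\mathcal{R}_a}[Y_i(0,1)-Y_i(0,0)],\qquad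 \widehat{IE}_{adj}=\frac1{n_a}\sum_{i\in\mathcal{R}_a}\frac{1-p_z}{1-\pi_i^a}\Big[\frac{\mathbb{I}\{\widetilde F_i=1\}Y_i}{p_z}-\frac{\mathbb{I}\{\widetilde F_i=0\}Y_i}{1-p_z}\Big].$$ Then $\mathbb{E}_{\boldsymbol{Z}}[\widehat{IE}_{adj}]=IE$.
   Context: Design-based setting: the network, the sample, the recruitment map and the potential outcomes are fixed; the only randomness is the treatment assignment $\boldsymbol{Z}$, and expectations are over $\boldsymbol{Z}$. *)

From mathcomp Require Import all_boot all_order all_algebra.
Set Implicit Arguments. Unset Strict Implicit. Unset Printing Implicit Defensive.
Import Order.TTheory GRing.Theory Num.Theory.
Local Open Scope ring_scope.

Notation assignment N := {ffun 'I_N -> bool}.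

Definition prZ (R : numFieldType) (N : nat) (q : 'I_N -> R) (z : assignment N) : R :=
  \prod_(i < N) (if z i then q i else 1 - q i).

Definition expZ (R : numFieldType) (N : nat) (q : 'I_N -> R)
  (X : assignment N -> R) : R :=
  \sum_(z : assignment N) prZ q z * X z.

Definition qEgo (R : numFieldType) (N : nat) (pz : R) (Re : {set 'I_N}) (i : 'I_N) : R :=
  if i \in Re then pz else 0.

Definition exposure (N : nat) (A : 'I_N -> 'I_N -> bool) (z : assignment N) (i : 'I_N) : bool :=
  (0 < \sum_(j < N | j != i) (z j * A i j))%N.

Definition Aobs (N : nat) (Ra : {set 'I_N}) (e : 'I_N -> 'I_N) (i j : 'I_N) : bool :=
  ((i \in Ra) && (j == e i)) || ((j \in Ra) && (i == e j)).

Definition Yobs (R : numFieldType) (N : nat) (A : 'I_N -> 'I_N -> bool)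
  (Y : 'I_N -> bool -> bool -> R) (z : assignment N) (i : 'I_N) : R :=
  \sum_(a : bool) \sum_(f : bool)
     Y i a f * ((z i == a) && (exposure A z i == f))%:R.

(* An alter i is never treated, so only the indicators Z_(e i) and F_i matter.
   Its observed exposure is Z_(e i), and Z_(e i) = 1 forces F_i = 1 since the
   recruiter is a neighbour; hence the observed contrast is, almost surely, an
   affine function of Z_(e i) and F_i.  Taking expectations gives
   (1 - pi_i) / (1 - p_z) * (Y_i(0,1) - Y_i(0,0)), which the weight
   (1 - p_z) / (1 - pi_i) turns into the individual indirect effect. *)
From mathcomp Require Import all_boot all_order all_algebra.
From mathcomp Require Import ring.
Set Implicit Arguments.
Unset Strict Implicit.
Unset Printing Implicit Defensive.

Import Order.TTheory GRing.Theory Num.Theory.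
Local Open Scope ring_scope.

Section Expectation.

Variables (R : numFieldType) (N : nat) (q : 'I_N -> R).

Lemma prZ_sum1 : \sum_(z : assignment N) prZ q z = 1.
Proof.
rewrite /prZ -(bigA_distr_bigA (fun i b => if b then q i else 1 - q i)).
by apply: big1 => i _; rewrite big_bool /= addrC subrK.
Qed.

Lemma expZ_cst c : expZ q (fun=> c) = c.
Proof. by rewrite /expZ -mulr_suml prZ_sum1 mul1r. Qed.

Lemma expZD (X1 X2 : assignment N -> R) :
  expZ q (fun z => X1 z + X2 z) = expZ q X1 + expZ q X2.
Proof. by rewrite /expZ -big_split; apply: eq_bigr => z _; rewrite mulrDr. Qed.

Lemma expZMl k (X : assignment N -> R) :
  expZ q (fun z => k * X z) = k * expZ q X.
Proof. by rewrite /expZ mulr_sumr; apply: eq_bigr => z _; rewrite mulrCA. Qed.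

Lemma expZ_sum (S : {set 'I_N}) (G : 'I_N -> assignment N -> R) :
  expZ q (fun z => \sum_(i in S) G i z) = \sum_(i in S) expZ q (G i).
Proof.
rewrite /expZ exchange_big; apply: eq_bigr => z _.
by rewrite mulr_sumr.
Qed.

Lemma expZ_coord k : expZ q (fun z => (z k)%:R) = q k.
Proof.
pose G i (b : bool) :=
  if b then q i else if i == k then 0 else 1 - q i.
transitivity (\sum_(z : assignment N) \prod_i G i (z i)).
  apply: eq_bigr => z _; rewrite /prZ (bigD1 k) //= [RHS](bigD1 k) //= /G eqxx.
  rewrite mulrC mulrA; congr (_ * _); last first.
    by apply: eq_bigr => i /negbTE ik; rewrite ik.
  by case: (z k); rewrite ?mul1r ?mul0r.
rewrite -(bigA_distr_bigA G) (bigD1 k) //= big_bool /G /= eqxx addr0.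
rewrite big1 ?mulr1 // => i /negbTE ik.
by rewrite big_bool /= ik addrC subrK.
Qed.

Lemma expZ_eq_null i (X1 X2 : assignment N -> R) :
  q i = 0 -> (forall z : assignment N, z i = false -> X1 z = X2 z) ->
  expZ q X1 = expZ q X2.
Proof.
move=> qi0 eqX; apply: eq_bigr => z _.
case zi: (z i); last by rewrite eqX.
by rewrite /prZ (bigD1 i) //= zi qi0 !mul0r.
Qed.

End Expectation.

Lemma exposureP N (A : 'I_N -> 'I_N -> bool) (z : assignment N) i k :
  A i k -> k != i -> z k -> exposure A z i.
Proof. by move=> Aik ki zk; rewrite /exposure (bigD1 k) //= Aik zk. Qed.

Lemma Yobs_untreated (R : numFieldType) N (A : 'I_N -> 'I_N -> bool)
    (Y : 'I_N -> bool -> bool -> R) (z : assignment N) i :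
  z i = false -> Yobs A Y z i = Y i false (exposure A z i).
Proof.
move=> zi; rewrite /Yobs !big_bool zi /=.
by case: (exposure A z i); rewrite /= ?mulr1 ?mulr0 ?addr0 ?add0r.
Qed.

Section Alter.

Variables (R : numFieldType) (N : nat) (A : 'I_N -> 'I_N -> bool).
Variables (Re Ra : {set 'I_N}) (e : 'I_N -> 'I_N).
Hypothesis Ra_disj : [disjoint Ra & Re].
Hypothesis e_ego : forall j, j \in Ra -> e j \in Re.
Hypothesis e_adj : forall j, j \in Ra -> A j (e j).

Lemma recruiter_neq i : i \in Ra -> e i != i.
Proof.
move=> iRa; apply/eqP => ei; move: (e_ego iRa).
by rewrite ei (disjointFr Ra_disj iRa).
Qed.

Lemma exposure_Aobs (z : assignment N) i :
  i \in Ra -> exposure (Aobs Ra e) z i = z (e i).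
Proof.
move=> iRa; rewrite /exposure (bigD1 (e i)) ?recruiter_neq //= big1.
  by rewrite /Aobs iRa eqxx /=; case: (z (e i)).
move=> j /andP[ji jei]; rewrite /Aobs iRa (negbTE jei) /=.
case jRa: (j \in Ra); last by rewrite muln0.
case: eqP => [ij|_]; last by rewrite muln0.
by move: (e_ego jRa); rewrite -ij (disjointFr Ra_disj iRa).
Qed.

Variables (pz : R) (Y : 'I_N -> bool -> bool -> R).
Hypotheses (pz_neq0 : pz != 0) (pz_neq1 : 1 - pz != 0).

Definition obs_contrast (z : assignment N) i :=
  (exposure (Aobs Ra e) z i)%:R * Yobs A Y z i / pz
  - (~~ exposure (Aobs Ra e) z i)%:R * Yobs A Y z i / (1 - pz).

Lemma obs_contrast_affine (z : assignment N) i : i \in Ra -> z i = false ->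
  obs_contrast z i =
    (Y i false true / pz + Y i false true / (1 - pz)) * (z (e i))%:R
    + (Y i false false - Y i false true) / (1 - pz) * (exposure A z i)%:R
    - Y i false false / (1 - pz).
Proof.
move=> iRa zi; rewrite /obs_contrast exposure_Aobs // Yobs_untreated //.
case zei: (z (e i)).
  rewrite (exposureP (e_adj iRa) (recruiter_neq iRa) zei) /=.
  by field; rewrite pz_neq0 pz_neq1.
by case: (exposure A z i) => /=; field; rewrite pz_neq0 pz_neq1.
Qed.

Lemma expZ_obs_contrast i : i \in Ra ->
  expZ (qEgo pz Re) (obs_contrast^~ i) =
    (1 - expZ (qEgo pz Re) (fun z => (exposure A z i)%:R)) / (1 - pz)
    * (Y i false true - Y i false false).
Proof.
move=> iRa.
have qi0 : qEgo pz Re i = 0 by rewrite /qEgo (disjointFr Ra_disj iRa).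
rewrite (expZ_eq_null qi0 (fun z => obs_contrast_affine iRa)).
rewrite !expZD !expZMl expZ_cst expZ_coord.
by rewrite /qEgo e_ego //; field; rewrite pz_neq0 pz_neq1.
Qed.

End Alter.

Theorem proposition2 (R : realFieldType) (N : nat)
  (A : 'I_N -> 'I_N -> bool)
  (Asym : forall i j, A i j = A j i)
  (Anoloop : forall i, A i i = false)
  (Re Ra : {set 'I_N})
  (Re_ne : Re != set0) (Ra_ne : Ra != set0)
  (Ra_disj : [disjoint Ra & Re])
  (e : 'I_N -> 'I_N)
  (e_ego : forall j, j \in Ra -> e j \in Re)
  (e_adj : forall j, j \in Ra -> A j (e j))
  (pz : R) (pz_gt0 : 0 < pz) (pz_lt1 : pz < 1)
  (Y : 'I_N -> bool -> bool -> R)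
  (pia : 'I_N -> R)
  (pia_def : forall i, pia i =
     expZ (qEgo pz Re) (fun z => (exposure A z i)%:R))
  (pia_lt1 : forall i, i \in Ra -> pia i < 1) :
  expZ (qEgo pz Re) (fun z =>
    (#|Ra|%:R)^-1 * \sum_(i in Ra)
      ((1 - pz) / (1 - pia i)) *
      ((exposure (Aobs Ra e) z i)%:R * Yobs A Y z i / pz
       - (~~ exposure (Aobs Ra e) z i)%:R * Yobs A Y z i / (1 - pz)))
  = (#|Ra|%:R)^-1 * \sum_(i in Ra) (Y i false true - Y i false false).
Proof.
have pz_neq0 : pz != 0 by rewrite gt_eqF.
have pz_neq1 : 1 - pz != 0 by rewrite subr_eq0 eq_sym lt_eqF.
rewrite expZMl expZ_sum; congr (_ * _); apply: eq_bigr => i iRa.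
have pia_neq1 : 1 - pia i != 0 by rewrite subr_eq0 eq_sym lt_eqF ?pia_lt1.
rewrite expZMl (expZ_obs_contrast Ra_disj e_ego e_adj Y pz_neq0 pz_neq1 iRa).
by rewrite -pia_def; field; rewrite pz_neq1 pia_neq1.
Qed.
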